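(* Let $K$ be a ramified quadratic extension of $\mathbb{Q}_2$, $d=2m$ with $m$ odd, $m\ge3$, and $f=a_1x_1^d+\dots+a_sx_s^d$ with all $a_i\in\mathcal{O}\setminus\{0\}$. Suppose that for some level $k$, $f$ has two variables at level $k$ with the same $\pi$-coefficient, and either $f$ has a variable at level $k+2$ and a variable at level $k+3$, or $f$ has a variable at level $k+3$ and a variable at level $k+4$. Then $f$ has a nontrivial zero in $K$.
   Context: $\mathcal{O}$ is the ring of integers of $K$ and $\pi$ the uniformizer: $\pi=\sqrt{2},\sqrt{-2},\sqrt{10},\sqrt{-10},1+\sqrt{-1},1+\sqrt{-5}$ for $K=\mathbb{Q}_2(\sqrt2),\mathbb{Q}_2(\sqrt{-2}),\mathbb{Q}_2(\sqrt{10}),\mathbb{Q}_2(\sqrt{-10}),\mathbb{Q}_2(\sqrt{-1}),\mathbb{Q}_2(\sqrt{-5})$ respectively. Each unit $u$ has a unique expansion $u=c_0+c_1\pi+c_2\pi^2+\cdots$ with $c_j\in\{0,1\}$, $c_0=1$. Writing $a_i=\pi^r u$ with $u$ a unit, the variable $x_i$ is at level $r\bmod d$ (levels are residues modulo $d$), and its $\pi$-coefficient is $c_1$ of $u$. A nontrivial zero is a point of $K^s$, not all coordinates zero, where $f$ vanishes. *)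

(* Concrete model of the six ramified quadratic extensions
   K = Q_2(sqrt c) of Q_2, c in {2,-2,10,-10,-1,-5}.
   - Z_2 is the inverse limit of Z/2^n Z: a 2-adic integer is a coherent
     sequence of integers (x_n) with x_{n+1} = x_n mod 2^n, two such being
     equal iff x_n = y_n mod 2^n for all n (setoid equality).
   - O = Z_2[sqrt c] (this is the ring of integers in all six cases), an element
     being a pair of 2-adic integers (re, im) standing for re + im*sqrt c.
   - K = O[1/pi]: an element is a pair (u, k) standing for u / pi^k. *)
From mathcomp Require Import all_boot all_algebra.
Set Implicit Arguments. Unset Strict Implicit. Unset Printing Implicit Defensive.
Import GRing.Theory Num.Theory.
Local Open Scope ring_scope.

Inductive ramext := Q2sqrt2 | Q2sqrtm2 | Q2sqrt10 | Q2sqrtm10 | Q2sqrtm1 | Q2sqrtm5.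

Definition rad (K : ramext) : int :=
  match K with
  | Q2sqrt2 => 2 | Q2sqrtm2 => -2 | Q2sqrt10 => 10 | Q2sqrtm10 => -10
  | Q2sqrtm1 => -1 | Q2sqrtm5 => -5 end.

Definition congz (n : nat) (x y : int) : Prop := (x - y) \in dvdz ((2 : int) ^+ n).

Definition OK := ((nat -> int) * (nat -> int))%type.

Definition coherent (u : OK) : Prop :=
  forall n, congz n (u.1 n.+1) (u.1 n) /\ congz n (u.2 n.+1) (u.2 n).

Definition eqO (u v : OK) : Prop :=
  forall n, congz n (u.1 n) (v.1 n) /\ congz n (u.2 n) (v.2 n).

Definition constO (a b : int) : OK := (fun _ => a, fun _ => b).
Definition zeroO : OK := constO 0 0.
Definition oneO : OK := constO 1 0.
Definition addO (u v : OK) : OK := (fun n => u.1 n + v.1 n, fun n => u.2 n + v.2 n).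
Definition mulO (K : ramext) (u v : OK) : OK :=
  (fun n => u.1 n * v.1 n + rad K * (u.2 n * v.2 n),
   fun n => u.1 n * v.2 n + u.2 n * v.1 n).
Definition expO (K : ramext) (u : OK) (k : nat) : OK := iter k (mulO K u) oneO.

Definition piO (K : ramext) : OK :=
  match K with
  | Q2sqrtm1 | Q2sqrtm5 => constO 1 1
  | _ => constO 0 1
  end.

Definition unitO (K : ramext) (u : OK) : Prop :=
  exists w, coherent w /\ eqO (mulO K u w) oneO.

Definition picoef (K : ramext) (u : OK) (b : bool) : Prop :=
  exists w, coherent w /\
    eqO u (addO (addO oneO (if b then piO K else zeroO))
                (mulO K (expO K (piO K) 2) w)).

Definition at_level (K : ramext) (d : nat) (a : OK) (k : nat) : Prop :=
  exists (r : nat) (u : OK), coherent u /\ unitO K u /\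
    eqO a (mulO K (expO K (piO K) r) u) /\ (r %% d = k %% d)%N.

Definition at_level_coef (K : ramext) (d : nat) (a : OK) (k : nat) (b : bool) : Prop :=
  exists (r : nat) (u : OK), coherent u /\ unitO K u /\
    eqO a (mulO K (expO K (piO K) r) u) /\ (r %% d = k %% d)%N /\ picoef K u b.

Definition FK := (OK * nat)%type.
Definition eqK (K : ramext) (x y : FK) : Prop :=
  eqO (mulO K x.1 (expO K (piO K) y.2)) (mulO K y.1 (expO K (piO K) x.2)).
Definition zeroK : FK := (zeroO, 0%N).
Definition oneK : FK := (oneO, 0%N).
Definition addK (K : ramext) (x y : FK) : FK :=
  (addO (mulO K x.1 (expO K (piO K) y.2)) (mulO K y.1 (expO K (piO K) x.2)),
   (x.2 + y.2)%N).
Definition mulK (K : ramext) (x y : FK) : FK := (mulO K x.1 y.1, (x.2 + y.2)%N).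
Definition expK (K : ramext) (x : FK) (k : nat) : FK := iter k (mulK K x) oneK.

Definition form_value (K : ramext) (d s : nat) (a : 'I_s -> OK) (x : 'I_s -> FK) : FK :=
  \big[addK K/zeroK]_(i < s) mulK K (a i, 0%N) (expK K (x i) d).

Definition has_nontrivial_zero (K : ramext) (d s : nat) (a : 'I_s -> OK) : Prop :=
  exists x : 'I_s -> FK,
    (forall i, coherent (x i).1) /\
    (exists i, ~ eqK K (x i) zeroK) /\
    eqK K (form_value K d a x) zeroK.

(* Put x_i = pi^(t_i) y_i, with t_i chosen so that the four given variables land on the
   levels k, k, k + d3, k + d4 of one and the same power of pi.  Setting y1 = 1, dividing by
   the unit u2 of the second variable and using that the first two units agree modulo pi^2,
   the form becomes, up to a unit, 1 + pi^2 r + y2^d + pi^d3 u3 y3^d + pi^d4 u4 y4^d.  Only the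
   residues of r, u3, u4 modulo 4 matter modulo 8, and a finite search shows that this
   always has a zero modulo 8 with y2 a unit.  Since d = 2m with m odd, a unit d-th power
   modulo 8 lifts by Newton iteration to a 2-adic d-th root, which gives the zero.

   Elements of O are coherent sequences of approximations in Z[sqrt c]; levels are well
   defined because the norm of pi^r u, u a unit, has 2-adic valuation exactly r. *)

From Pilot Require Import Defs.
From HB Require Import structures.
From mathcomp Require Import all_boot all_algebra.
From mathcomp Require Import ring zify.
Set Implicit Arguments. Unset Strict Implicit. Unset Printing Implicit Defensive.
Import GRing.Theory.
Local Open Scope ring_scope.

Record zsqrt (c : int) := ZSqrt { re : int; im : int }.
Arguments ZSqrt {c}.

Section QuadraticRing.
Variable c : int.
Local Notation R := (zsqrt c).

Lemma zsqrtP (x y : R) : re x = re y -> im x = im y -> x = y.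
Proof. by case: x => a b; case: y => a' b' /= -> ->. Qed.

Definition zsqrt_eqb (x y : R) := (re x == re y) && (im x == im y).

Lemma zsqrt_eqbP : Equality.axiom zsqrt_eqb.
Proof.
move=> x y; apply: (iffP andP) => [[/eqP ere /eqP eim] | ->]; last by rewrite !eqxx.
exact: zsqrtP.
Qed.
HB.instance Definition _ := hasDecEq.Build R zsqrt_eqbP.

Lemma zsqrt_pairK : cancel (fun x : R => (re x, im x)) (fun p => ZSqrt p.1 p.2).
Proof. by case. Qed.
HB.instance Definition _ := CanHasChoice zsqrt_pairK.

Definition zsqrt_add (x y : R) : R := ZSqrt (re x + re y) (im x + im y).
Definition zsqrt_opp (x : R) : R := ZSqrt (- re x) (- im x).
Definition zsqrt_mul (x y : R) : R :=
  ZSqrt (re x * re y + c * (im x * im y)) (re x * im y + im x * re y).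

Fact zsqrt_addA : associative zsqrt_add.
Proof. by move=> x y z; apply: zsqrtP; rewrite /= addrA. Qed.
Fact zsqrt_addC : commutative zsqrt_add.
Proof. by move=> x y; apply: zsqrtP; rewrite /= addrC. Qed.
Fact zsqrt_add0 : left_id (ZSqrt 0 0) zsqrt_add.
Proof. by move=> x; apply: zsqrtP; rewrite /= add0r. Qed.
Fact zsqrt_addN : left_inverse (ZSqrt 0 0) zsqrt_opp zsqrt_add.
Proof. by move=> x; apply: zsqrtP; rewrite /= addNr. Qed.
HB.instance Definition _ :=
  GRing.isZmodule.Build R zsqrt_addA zsqrt_addC zsqrt_add0 zsqrt_addN.

Fact zsqrt_mulA : associative zsqrt_mul.
Proof. by move=> x y z; apply: zsqrtP => /=; ring. Qed.
Fact zsqrt_mulC : commutative zsqrt_mul.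
Proof. by move=> x y; apply: zsqrtP => /=; ring. Qed.
Fact zsqrt_mul1 : left_id (ZSqrt 1 0) zsqrt_mul.
Proof. by move=> x; apply: zsqrtP => /=; ring. Qed.
Fact zsqrt_mulD : left_distributive zsqrt_mul zsqrt_add.
Proof. by move=> x y z; apply: zsqrtP => /=; ring. Qed.
Fact zsqrt_one_neq0 : ZSqrt 1 0 != ZSqrt 0 0 :> R. Proof. by []. Qed.
HB.instance Definition _ := GRing.Zmodule_isComNzRing.Build R
  zsqrt_mulA zsqrt_mulC zsqrt_mul1 zsqrt_mulD zsqrt_one_neq0.

Lemma reB (x y : R) : re (x - y) = re x - re y. Proof. by []. Qed.
Lemma imB (x y : R) : im (x - y) = im x - im y. Proof. by []. Qed.
Lemma reM (x y : R) : re (x * y) = re x * re y + c * (im x * im y). Proof. by []. Qed.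
Lemma imM (x y : R) : im (x * y) = re x * im y + im x * re y. Proof. by []. Qed.

Lemma zsqrt_exp2 k : 2 ^+ k = ZSqrt (2 ^+ k) 0 :> R.
Proof.
elim: k => [|k IHk] //; rewrite exprS IHk.
by apply: zsqrtP; rewrite ?reM ?imM [in RHS]exprS /=; ring.
Qed.

Definition norm (x : R) : int := re x ^+ 2 - c * im x ^+ 2.

Lemma normM (x y : R) : norm (x * y) = norm x * norm y.
Proof. by rewrite /norm reM imM; ring. Qed.

Lemma normX (x : R) n : norm (x ^+ n) = norm x ^+ n.
Proof.
elim: n => [|n IHn]; last by rewrite !exprS normM IHn.
by rewrite /norm /=; ring.
Qed.

End QuadraticRing.

Section Congruence.
Variable c : int.
Local Notation R := (zsqrt c).
Implicit Types x y z : R.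

Definition cong2 k x y := exists z, x - y = 2 ^+ k * z.

Lemma cong2_refl k x : cong2 k x x.
Proof. by exists 0; rewrite subrr mulr0. Qed.

Lemma cong2_sym k x y : cong2 k x y -> cong2 k y x.
Proof. by case=> z e; exists (- z); rewrite -opprB e mulrN. Qed.

Lemma cong2_trans k y x z : cong2 k x y -> cong2 k y z -> cong2 k x z.
Proof.
by case=> u e1 [v e2]; exists (u + v); rewrite mulrDr -e1 -e2 addrA subrK.
Qed.

Lemma cong2D k x y x' y' : cong2 k x y -> cong2 k x' y' -> cong2 k (x + x') (y + y').
Proof. by case=> u e1 [v e2]; exists (u + v); rewrite mulrDr -e1 -e2; ring. Qed.

Lemma cong2N k x y : cong2 k x y -> cong2 k (- x) (- y).
Proof. by case=> u e; exists (- u); rewrite mulrN -e; ring. Qed.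

Lemma cong2B k x y x' y' : cong2 k x y -> cong2 k x' y' -> cong2 k (x - x') (y - y').
Proof. by move=> e e'; apply: cong2D e (cong2N e'). Qed.

Lemma cong2M k x y x' y' : cong2 k x y -> cong2 k x' y' -> cong2 k (x * x') (y * y').
Proof.
case=> u e1 [v e2]; exists (x * v + u * y').
by rewrite mulrDr mulrCA -e2 mulrA -e1; ring.
Qed.

Lemma cong2Ml k a x y : cong2 k x y -> cong2 k (a * x) (a * y).
Proof. exact/cong2M/cong2_refl. Qed.

Lemma cong2Mr k a x y : cong2 k x y -> cong2 k (x * a) (y * a).
Proof. by move/cong2M; apply; apply: cong2_refl. Qed.

Lemma cong2X k n x y : cong2 k x y -> cong2 k (x ^+ n) (y ^+ n).
Proof.
move=> e; elim: n => [|n IHn]; first exact: cong2_refl.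
by rewrite !exprS; apply: cong2M.
Qed.

Lemma cong2D0 k x y : cong2 k x 0 -> cong2 k y 0 -> cong2 k (x + y) 0.
Proof. by move=> x0 y0; have := cong2D x0 y0; rewrite addr0. Qed.

Lemma cong2B0 k x y : cong2 k x 0 -> cong2 k y 0 -> cong2 k (x - y) 0.
Proof. by move=> x0 y0; have := cong2B x0 y0; rewrite subr0. Qed.

Lemma cong2M0 k a x : cong2 k x 0 -> cong2 k (a * x) 0.
Proof. by move/(cong2Ml a); rewrite mulr0. Qed.

Lemma cong2_sum k (I : Type) (r : seq I) (F G : I -> R) :
  (forall i, cong2 k (F i) (G i)) -> cong2 k (\sum_(i <- r) F i) (\sum_(i <- r) G i).
Proof.
by move=> FG; apply: (big_ind2 (cong2 k)) => //; [apply: cong2_refl | move=> *; apply: cong2D].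
Qed.

Lemma cong2W k l x y : (l <= k)%N -> cong2 k x y -> cong2 l x y.
Proof. by move=> lk [z e]; exists (2 ^+ (k - l) * z); rewrite e mulrA -exprD subnKC. Qed.

Lemma cong2_subr0 k x y : cong2 k x y <-> cong2 k (x - y) 0.
Proof. by split; case=> z e; exists z; rewrite ?subr0 // -e subr0. Qed.

Lemma cong2_int k x y :
  cong2 k x y <-> (2 ^+ k %| re x - re y)%Z /\ (2 ^+ k %| im x - im y)%Z.
Proof.
rewrite /cong2; split=> [[z e] | [/dvdzP[a ea] /dvdzP[b eb]]].
  have:= congr1 (@re c) e; have:= congr1 (@im c) e.
  rewrite zsqrt_exp2 reB imB reM imM /= => -> ->.
  by split; apply/dvdzP; [exists (re z) | exists (im z)]; ring.
exists (ZSqrt a b); apply: zsqrtP; rewrite zsqrt_exp2 ?reB ?imB ?reM ?imM /= ?ea ?eb; ring.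
Qed.

Lemma cong2_norm k x y : cong2 k x y -> (2 ^+ k %| norm x - norm y)%Z.
Proof.
case/cong2_int=> dre dim.
have -> : norm x - norm y =
    (re x - re y) * (re x + re y) - c * ((im x - im y) * (im x + im y)).
  by rewrite /norm; ring.
by apply: rpredB; [apply: dvdz_mulr | apply/dvdz_mull/dvdz_mulr].
Qed.

Definition div2X k x : R := ZSqrt (re x %/ 2 ^+ k)%Z (im x %/ 2 ^+ k)%Z.

Lemma div2XK k x : cong2 k x 0 -> x = 2 ^+ k * div2X k x.
Proof.
case/cong2_int; rewrite !subr0 => dre dim.
by apply: zsqrtP; rewrite zsqrt_exp2 ?reM ?imM /= !mul0r ?mulr0 addr0 mulrC divzK.
Qed.

Definition coherent_seq (X : nat -> R) := forall n, cong2 n (X n.+1) (X n).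

Lemma coherent_seq_cong X k n : coherent_seq X -> (k <= n)%N -> cong2 k (X n) (X k).
Proof.
move=> cohX /subnK <-; elim: (n - k)%N => [|j IHj]; first exact: cong2_refl.
by apply: cong2_trans IHj; apply: (cong2W (leq_addl j k)); apply: cohX.
Qed.

End Congruence.

Section Units.
Variable c : int.
Local Notation R := (zsqrt c).
Implicit Types x y : R.

Definition unit2 x : bool := odd `|norm x|.

Lemma unit2M x y : unit2 (x * y) = unit2 x && unit2 y.
Proof. by rewrite /unit2 normM abszM oddM. Qed.

Lemma unit2_cong k x y : (0 < k)%N -> cong2 k x y -> unit2 x = unit2 y.
Proof.
move=> k_gt0 /(cong2W k_gt0)/cong2_norm; rewrite expr1 /unit2.
by move: (norm x) (norm y) => a b; lia.
Qed.

Lemma unit2_1 : unit2 1.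
Proof. by rewrite /unit2 /norm /= expr0n mulr0 subr0. Qed.

Lemma unit2_cong1 k x y : (0 < k)%N -> cong2 k (x * y) 1 -> unit2 x.
Proof.
by move=> k_gt0 /(unit2_cong k_gt0); rewrite unit2_1 unit2M => /andP[].
Qed.

Lemma unit2_sqr x : unit2 x -> cong2 1 (x ^+ 2) 1.
Proof.
rewrite /unit2 /norm => odd_norm; apply/cong2_int; rewrite expr1.
split; apply/dvdzP; rewrite expr2 ?reM ?imM /=; last by exists (re x * im x); ring.
have /dvdzP[q eq] : (2 %| re x ^+ 2 - c * im x ^+ 2 - 1)%Z.
  by move: (_ - _) odd_norm => a; lia.
by exists (q + c * im x ^+ 2); rewrite mulrDl -eq; ring.
Qed.

Lemma cong2_sqr1 k x : (0 < k)%N -> cong2 k x 1 -> cong2 k.+1 (x ^+ 2) 1.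
Proof.
move=> k_gt0 [z e]; have -> : x = 1 + 2 ^+ k * z by rewrite -e; ring.
by case: k k_gt0 {e} => // k _; exists (z + 2 ^+ k * z ^+ 2); rewrite !exprS; ring.
Qed.

Lemma unit2_expr8 x : unit2 x -> cong2 3 (x ^+ 8) 1.
Proof.
move=> /unit2_sqr/(cong2_sqr1 (ltn0Sn 0))/(cong2_sqr1 (ltn0Sn 1)).
by rewrite -!exprM.
Qed.

Lemma unit2_expr_even x n : unit2 x -> cong2 1 (x ^+ (2 * n)) 1.
Proof. by move/unit2_sqr/(cong2X n); rewrite -exprM expr1n. Qed.

End Units.

Lemma expr1D_sqr (R : comRingType) (y : R) n :
  exists q, (1 + y) ^+ n = 1 + n%:R * y + y ^+ 2 * q.
Proof.
elim: n => [|n [q IHn]]; first by exists 0; rewrite mulr0 mul0r !addr0.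
by exists (n%:R + q + y * q); rewrite exprS IHn mulrS; ring.
Qed.

Section Hensel.
Variables (c : int) (m : nat).
Local Notation R := (zsqrt c).
Local Notation d := (2 * m)%N.
Hypothesis m_odd : odd m.

(* Newton step for s^d = t: if s^d - t = 2^(k+3) e, then modulo 2^(k+4)
   (s (1 - 2^(k+2) e))^d - t = 2^(k+3) e (1 - m s^d), which vanishes as m and s^d are odd. *)
Definition root_lift k (s t : R) := s - 2 ^+ k.+2 * div2X k.+3 (s ^+ d - t) * s.

Lemma root_lift_cong k s t : cong2 k.+2 (root_lift k s t) s.
Proof.
by exists (- (div2X k.+3 (s ^+ d - t) * s)); rewrite /root_lift; ring.
Qed.

Lemma root_liftP k s t : cong2 1 (s ^+ d) 1 -> cong2 k.+3 (s ^+ d) t ->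
  cong2 k.+4 (root_lift k s t ^+ d) t.
Proof.
move=> [w ew] /cong2_subr0/div2XK; set e := div2X _ _; set A := s ^+ d => ee.
have [q eq] := expr1D_sqr (- (2 ^+ k.+2 * e)) d.
have -> : root_lift k s t = s * (1 - 2 ^+ k.+2 * e) by rewrite /root_lift -/e; ring.
have m_half : m%:R = 1 + 2 * (m./2)%:R :> R.
  by rewrite -{1}(odd_double_half m) m_odd -mul2n natrD natrM.
exists (A * 2 ^+ k * e ^+ 2 * q - e * (w + (m./2)%:R * A)).
have -> : t = A - 2 ^+ k.+3 * e by rewrite -ee; ring.
rewrite exprMn -/A eq natrM m_half.
have -> : A = 1 + 2 * w by move: ew; rewrite -/A expr1 => /(canRL (subrK 1)) ->; ring.
by rewrite !exprS; ring.
Qed.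

Variables (T : nat -> R) (s0 : R).
Hypotheses (cohT : coherent_seq T) (unit_s0 : unit2 s0).
Hypothesis s0_root : cong2 3 (s0 ^+ d) (T 3).

Fixpoint hensel_seq j :=
  if j is j'.+1 then root_lift j' (hensel_seq j') (T j'.+4) else s0.

Lemma hensel_seq_root j : cong2 j.+3 (hensel_seq j ^+ d) (T j.+3).
Proof.
elim: j => [|j IHj] //=; apply: root_liftP; last first.
  by apply: cong2_trans IHj (cong2_sym (cohT _)).
have T3_1 : cong2 1 (T 3) 1.
  exact: cong2_trans (cong2_sym (cong2W _ s0_root)) (unit2_expr_even _ unit_s0).
apply: cong2_trans (cong2W _ IHj) _ => //.
by apply: cong2_trans (cong2W _ (coherent_seq_cong cohT _)) T3_1.
Qed.

Lemma hensel_root : exists s, coherent_seq s /\ forall n, cong2 n (s n ^+ d) (T n).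
Proof.
exists hensel_seq; split=> n.
  exact: cong2W (leq_addl 2 n) (root_lift_cong _ _ _).
have le_n3 : (n <= n.+3)%N := leq_addl 3 n.
exact: cong2_trans (cong2W le_n3 (hensel_seq_root n)) (coherent_seq_cong cohT le_n3).
Qed.

End Hensel.

Section ResidueSearch.
Variable c : int.
Local Notation R := (zsqrt c).
Implicit Types x y : R.

Definition redmod k x : R := ZSqrt (re x %% 2 ^+ k)%Z (im x %% 2 ^+ k)%Z.
Definition mulmod k x y := redmod k (x * y).
Definition expmod k x n := iter n (mulmod k x) 1.

Definition residues4 : seq R :=
  [seq ZSqrt a b | a <- [:: 0; 1; 2; 3] : seq int, b <- [:: 0; 1; 2; 3] : seq int].
Definition units4 := [seq x <- residues4 | unit2 x].
(* A few small units; they turn out to be enough candidates for the search below. *)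
Definition root_cands : seq R :=
  [seq x <- [:: ZSqrt 1 0; ZSqrt 1 1; ZSqrt 1 2; ZSqrt 1 3; ZSqrt 0 1; ZSqrt 2 1] | unit2 x].

Definition zero_sum_mod8 (a : R) (ss t3s t4s : seq R) :=
  has (fun t3 => has (fun t4 => redmod 3 (- (a + t3 + t4)) \in ss) t4s) t3s.

(* The tables are let-bound so that the VM computes each of them once. *)
Definition solvable_mod8 (pi : R) (n d3 d4 : nat) : bool :=
  let zs := [seq expmod 3 z n | z <- 0 :: root_cands] in
  let ss := [seq expmod 3 z n | z <- root_cands] in
  let p2 := expmod 3 pi 2 in
  let p3 := expmod 3 pi d3 in
  let p4 := expmod 3 pi d4 in
  let U := units4 in
  all (fun r => let a := 1 + mulmod 3 p2 r in
    all (fun u3 => let a3 := mulmod 3 p3 u3 in let t3s := [seq mulmod 3 a3 z | z <- zs] in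
      all (fun u4 => let a4 := mulmod 3 p4 u4 in let t4s := [seq mulmod 3 a4 z | z <- zs] in
      zero_sum_mod8 a ss t3s t4s) U) U) residues4.

Lemma redmod_cong k x : cong2 k (redmod k x) x.
Proof.
apply/cong2_int; split; apply/dvdzP; rewrite /redmod /=.
  by exists (- (re x %/ 2 ^+ k)%Z); rewrite {2}(divz_eq (re x) (2 ^+ k)); ring.
by exists (- (im x %/ 2 ^+ k)%Z); rewrite {2}(divz_eq (im x) (2 ^+ k)); ring.
Qed.

Lemma mulmod_cong k x y : cong2 k (mulmod k x y) (x * y).
Proof. exact: redmod_cong. Qed.

Lemma expmod_cong k x n : cong2 k (expmod k x n) (x ^+ n).
Proof.
elim: n => [|n IHn]; first exact: cong2_refl.
by rewrite /expmod iterS exprS; apply: cong2_trans (mulmod_cong _ _ _) (cong2Ml _ IHn).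
Qed.

Lemma redmod2_residues4 x : redmod 2 x \in residues4.
Proof.
have mod4 (a : int) : (a %% 2 ^+ 2)%Z \in [:: 0; 1; 2; 3].
  have : (0 <= a %% 4 < 4)%Z by lia.
  by move: (a %% 4)%Z => b; rewrite !inE; lia.
by apply/allpairsP; exists (re (redmod 2 x), im (redmod 2 x)); rewrite !mod4.
Qed.

Lemma root_cands_unit z : z \in root_cands -> unit2 z.
Proof. by rewrite mem_filter => /andP[]. Qed.

Lemma redmod2_units4 x : unit2 x -> redmod 2 x \in units4.
Proof.
by move=> ux; rewrite mem_filter redmod2_residues4 (unit2_cong (ltn0Sn 1) (redmod_cong 2 x)) ux.
Qed.

Lemma expr_even_mod8 z m : odd m -> z \in 0 :: root_cands ->
  cong2 3 (z ^+ (2 * m)) (z ^+ ((2 * m) %% 8)).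
Proof.
move=> m_odd; rewrite inE => /predU1P[-> | /root_cands_unit uz].
  rewrite !expr0n.
  have [-> ->] : (2 * m == 0)%N = false /\ ((2 * m) %% 8 == 0)%N = false by split; lia.
  exact: cong2_refl.
rewrite {1}(divn_eq (2 * m) 8) exprD mulnC exprM -[X in cong2 _ _ X]mul1r.
by apply: cong2Mr; rewrite -(expr1n _ ((2 * m) %/ 8)); apply/cong2X/unit2_expr8.
Qed.

Lemma mul_piX_cong pi e d x y : pi ^+ 2 = 2 * e -> (2 <= d)%N -> cong2 2 x y ->
  cong2 3 (pi ^+ d * x) (pi ^+ d * y).
Proof.
move=> pi2 d_ge2 [w ew]; exists (e * pi ^+ (d - 2) * w).
by rewrite -mulrBr ew -(subnKC d_ge2) exprD pi2 addKn !exprS; ring.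
Qed.

Lemma zero_sum_mod8P a ss t3s t4s : zero_sum_mod8 a ss t3s t4s ->
  exists t3 t4 s, [/\ t3 \in t3s, t4 \in t4s, s \in ss & cong2 3 (a + s + t3 + t4) 0].
Proof.
case/hasP=> t3 t3_in /hasP[t4 t4_in s_in]; exists t3, t4, (redmod 3 (- (a + t3 + t4))).
split=> //; have -> : forall s, a + s + t3 + t4 = a + t3 + t4 + s by move=> s; ring.
by have := cong2D (cong2_refl 3 (a + t3 + t4)) (redmod_cong 3 (- (a + t3 + t4))); rewrite subrr.
Qed.

Lemma solvable_mod8_sound (pi e r u3 u4 : R) m d3 d4 :
  pi ^+ 2 = 2 * e -> (2 <= d3)%N -> (2 <= d4)%N -> odd m ->
  solvable_mod8 pi ((2 * m) %% 8) d3 d4 -> unit2 u3 -> unit2 u4 ->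
  exists z3 z4 s, unit2 s /\ cong2 3 (1 + pi ^+ 2 * r + s ^+ (2 * m)
    + pi ^+ d3 * u3 * z3 ^+ (2 * m) + pi ^+ d4 * u4 * z4 ^+ (2 * m)) 0.
Proof.
move=> pi2 d3_ge2 d4_ge2 m_odd search u3_unit u4_unit.
set n := ((2 * m) %% 8)%N.
have powE z : z \in 0 :: root_cands -> cong2 3 (z ^+ (2 * m)) (expmod 3 z n).
  by move=> z_in; apply: cong2_trans (expr_even_mod8 m_odd z_in) (cong2_sym (expmod_cong _ _ _)).
have scaledE d u z : (2 <= d)%N -> z \in 0 :: root_cands ->
    cong2 3 (pi ^+ d * u * z ^+ (2 * m))
      (mulmod 3 (mulmod 3 (expmod 3 pi d) (redmod 2 u)) (expmod 3 z n)).
  move=> d_ge2 z_in; apply: cong2_sym; apply: cong2_trans (mulmod_cong _ _ _) _.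
  apply: cong2M (cong2_sym (powE _ z_in)); apply: cong2_trans (mulmod_cong _ _ _) _.
  apply: cong2_trans (cong2Mr _ (expmod_cong _ _ _)) _.
  exact: mul_piX_cong pi2 d_ge2 (redmod_cong 2 u).
have := allP search _ (redmod2_residues4 r) => /allP/(_ _ (redmod2_units4 u3_unit)).
move=> /allP/(_ _ (redmod2_units4 u4_unit))/zero_sum_mod8P[t3 [t4 [s4 []]]].
case/mapP=> _ /mapP[z3 z3_in ->] -> /mapP[_ /mapP[z4 z4_in ->] ->] /mapP[s s_in ->] sum0.
exists z3, z4, s; split; first exact: root_cands_unit.
apply: cong2_trans _ sum0; apply: cong2D; last exact: scaledE.
apply: cong2D; last exact: scaledE.
apply: cong2D; last by apply: powE; rewrite inE s_in orbT.
apply/cong2D/cong2_sym/(cong2_trans (mulmod_cong _ _ _)); first exact: cong2_refl.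
apply: cong2_trans (cong2Mr _ (expmod_cong _ _ _)) _.
exact: mul_piX_cong pi2 (leqnn 2) (redmod_cong 2 r).
Qed.

End ResidueSearch.

Definition uniformizer (K : ramext) : zsqrt (Defs.rad K) :=
  match K with Q2sqrtm1 | Q2sqrtm5 => ZSqrt 1 1 | _ => ZSqrt 0 1 end.

Lemma solvable_mod8_uniformizer (K : ramext) :
  all (fun n => solvable_mod8 (uniformizer K) n 2 3 && solvable_mod8 (uniformizer K) n 3 4)
    [:: 2; 6]%N.
Proof. by case: K; vm_compute. Qed.

Lemma uniformizer_sqr K : exists e, uniformizer K ^+ 2 = 2 * e.
Proof.
case: K; [exists (ZSqrt 1 0) | exists (ZSqrt (-1) 0) | exists (ZSqrt 5 0)
  | exists (ZSqrt (-5) 0) | exists (ZSqrt 0 1) | exists (ZSqrt (-2) 1)]; exact/eqP.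
Qed.

Lemma norm_uniformizer K : exists o, norm (uniformizer K) = 2 * o /\ odd `|o|.
Proof.
by case: K; [exists (-1) | exists 1 | exists (-5) | exists 5 | exists 1 | exists 3].
Qed.

Lemma addn_modn_inj (k e e' d : nat) :
  ((k + e) %% d = (k + e') %% d -> e < d -> e' < d -> e = e')%N.
Proof. by move=> /eqP + ed e'd; rewrite eqn_modDl !modn_small // => /eqP. Qed.

Lemma dvdz_2X_odd (r : nat) (o : int) : odd `|o| -> ~~ (2 ^+ r.+1 %| 2 ^+ r * o)%Z.
Proof. by rewrite exprSr dvdz_mul2l ?expf_neq0 //; lia. Qed.

Section Uniformizer.
Variable K : ramext.
Local Notation R := (zsqrt (Defs.rad K)).
Local Notation pi := (uniformizer K).

Lemma norm_piX_unit r (u : R) : unit2 u ->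
  exists o, norm (pi ^+ r * u) = 2 ^+ r * o /\ odd `|o|.
Proof.
have [o [norm_pi o_odd]] := norm_uniformizer K; rewrite /unit2 => u_unit.
exists (o ^+ r * norm u); rewrite normM normX norm_pi exprMn mulrA; split=> //.
by rewrite abszM abszX oddM oddX o_odd u_unit orbT.
Qed.

Lemma piX_neq0 t : ~ (forall n, cong2 n (pi ^+ t) 0).
Proof.
move/(_ t.+1)/cong2_norm; rewrite -[pi ^+ t]mulr1.
have [o [-> o_odd]] := norm_piX_unit t (unit2_1 _).
have -> : norm (0 : R) = 0 by rewrite /norm /= !expr0n mulr0 subr0.
by rewrite subr0; apply/negP/dvdz_2X_odd.
Qed.

Lemma piX_unit_inj n r r' (u u' : R) : (r < n)%N -> (r' < n)%N ->
  unit2 u -> unit2 u' -> cong2 n (pi ^+ r * u) (pi ^+ r' * u') -> r = r'.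
Proof.
wlog le_rr' : r r' u u' / (r <= r')%N => [hwlog|].
  case/orP: (leq_total r r') => le rn r'n uu uu' cu; first exact: hwlog le rn r'n uu uu' cu.
  exact/esym/(hwlog _ _ _ _ le r'n rn uu' uu (cong2_sym cu)).
move=> lt_rn _ u_unit u'_unit; case: ltngtP le_rr' => // lt_rr' _ /(cong2W lt_rn).
move/cong2_norm; have [o [-> o_odd]] := norm_piX_unit r u_unit.
have [o' [-> _]] := norm_piX_unit r' u'_unit.
have -> : 2 ^+ r * o - 2 ^+ r' * o' = 2 ^+ r * (o - 2 * (2 ^+ (r' - r.+1) * o')).
  have -> : 2 ^+ r' = 2 ^+ r * 2 * 2 ^+ (r' - r.+1) :> int.
    by rewrite -exprSr -exprD subnKC.
  by ring.
have odd_diff : odd `|(o - 2 * (2 ^+ (r' - r.+1) * o'))%R|%N by lia.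
by move/negP: (dvdz_2X_odd r odd_diff).
Qed.

End Uniformizer.

Section Representation.
Variable K : ramext.
Local Notation R := (zsqrt (Defs.rad K)).

Definition approx (u : OK) n : R := ZSqrt (u.1 n) (u.2 n).
Definition of_seq (X : nat -> R) : OK := (fun n => re (X n), fun n => im (X n)).

Lemma approx_of_seq X n : approx (of_seq X) n = X n. Proof. exact: zsqrtP. Qed.
Lemma approx_add u v n : approx (addO u v) n = approx u n + approx v n. Proof. by []. Qed.
Lemma approx_mul u v n : approx (mulO K u v) n = approx u n * approx v n. Proof. by []. Qed.
Lemma approx_one n : approx oneO n = 1. Proof. by []. Qed.
Lemma approx_zero n : approx zeroO n = 0. Proof. by []. Qed.
Lemma approx_pi n : approx (piO K) n = uniformizer K. Proof. by rewrite /approx; case: K. Qed.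

Lemma approx_exp u k n : approx (expO K u k) n = approx u n ^+ k.
Proof. by elim: k => [|k IHk] //; rewrite exprS -IHk /expO iterS. Qed.

Lemma eqOP u v : eqO u v <-> forall n, cong2 n (approx u n) (approx v n).
Proof. by split=> uv n; [apply/cong2_int; apply: uv | case/cong2_int: (uv n)]. Qed.

Lemma coherentP u : coherent u <-> coherent_seq (approx u).
Proof. by split=> cu n; [apply/cong2_int; apply: cu | case/cong2_int: (cu n)]. Qed.

Lemma expK_integral (y : OK) k n :
  (expK K (y, 0%N) k).2 = 0%N /\ approx (expK K (y, 0%N) k).1 n = approx y n ^+ k.
Proof.
elim: k => [|k [IH2 IH1]] //; rewrite /expK iterS -/(expK K (y, 0%N) k) /=.
by rewrite IH2 exprS -IH1.
Qed.

Lemma form_value_of_seq d s (a : 'I_s -> OK) (x : 'I_s -> nat -> R) n :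
  let fv := form_value K d a (fun i => (of_seq (x i), 0%N)) in
  fv.2 = 0%N /\ approx fv.1 n = \sum_i approx (a i) n * x i n ^+ d.
Proof.
rewrite /form_value; elim: (index_enum _) => [|i l [IH2 IH1]]; first by rewrite !big_nil.
have [e2 e1] := expK_integral (of_seq (x i)) d n.
rewrite !big_cons; set F := \big[_/_]_(j <- l) _ in IH2 IH1 *.
case: F IH2 IH1 => Fu Fk /= -> IH1; case: (expK _ _ _) e2 e1 => Eu Ek /= -> e1.
by rewrite approx_add !approx_mul IH1 e1 approx_of_seq !approx_exp /= !mulr1.
Qed.

Lemma nontrivial_zero_of_seq d s (a : 'I_s -> OK) (x : 'I_s -> nat -> R) i0 :
  (forall i, coherent_seq (x i)) -> ~ (forall n, cong2 n (x i0 n) 0) ->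
  (forall n, cong2 n (\sum_i approx (a i) n * x i n ^+ d) 0) ->
  has_nontrivial_zero K d a.
Proof.
move=> cohx x_nz f0; exists (fun i => (of_seq (x i), 0%N)); split; [|split].
- by move=> i; apply/coherentP => n; rewrite !approx_of_seq; apply: cohx.
- exists i0 => /eqOP x0; apply: x_nz => n; move: (x0 n).
  by rewrite !approx_mul !approx_exp !expr0 approx_of_seq approx_zero mulr1 mul0r.
apply/eqOP => n; have [-> fvE] := form_value_of_seq d a x n.
by rewrite !approx_mul !approx_exp expr0 approx_zero mulr1 mul0r fvE.
Qed.

End Representation.

Lemma sum_tnth_support (V : nmodType) (I : finType) n (idx : n.-tuple I) (F : I -> V) :
  uniq idx -> (forall i, i \notin idx -> F i = 0) -> \sum_i F i = \sum_j F (tnth idx j).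
Proof.
move=> idx_uniq F0; rewrite -(big_tuple _ _ idx xpredT F) (big_uniq _ idx_uniq).
by rewrite (bigID (mem idx)) /= [X in _ + X]big1 ?addr0 // => i /F0.
Qed.

Lemma addn_divn_subn (r e d : nat) :
  (r %% d = e %% d -> r <= e -> r + d * ((e - r) %/ d) = e)%N.
Proof.
move=> /eqP; rewrite eq_sym => re le_re; move: re; rewrite eqn_mod_dvd // => /divnK.
by rewrite mulnC => ->; rewrite subnKC.
Qed.

Section Rescaling.
Variable K : ramext.
Local Notation R := (zsqrt (Defs.rad K)).
Local Notation pi := (uniformizer K).

Lemma nontrivial_zero_of_rescaled d s (a : 'I_s -> OK) n (idx : n.-tuple 'I_s) k
    (r e : 'I_n -> nat) (u y : 'I_n -> nat -> R) j0 :
  (0 < d)%N -> uniq idx ->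
  (forall j l, cong2 l (approx K (a (tnth idx j)) l) (pi ^+ r j * u j l)) ->
  (forall j, r j %% d = (k + e j) %% d)%N ->
  (forall j, coherent_seq (y j)) -> (forall l, y j0 l = 1) ->
  (forall l, cong2 l (\sum_j pi ^+ e j * u j l * y j l ^+ d) 0) ->
  has_nontrivial_zero K d a.
Proof.
move=> d_gt0 idx_uniq a_lvl r_mod coh_y y_j0 y_zero.
set E := (d * \sum_j r j + k)%N; pose t j := ((E + e j - r j) %/ d)%N.
have rt j : (r j + d * t j = E + e j)%N.
  apply: addn_divn_subn; first by rewrite r_mod /E -addnA [(d * _)%N]mulnC modnMDl.
  rewrite /E -addnA; apply: leq_trans (leq_addr _ _); apply: leq_trans (leq_pmull _ d_gt0).
  by rewrite (bigD1 j) //= leq_addr.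
pose x i l := if [pick j | tnth idx j == i] is Some j then pi ^+ t j * y j l else 0.
have x_idx j : x (tnth idx j) = fun l => pi ^+ t j * y j l.
  rewrite /x; case: pickP => [j' /eqP/(tuple_uniqP _ idx_uniq) -> // | /(_ j)].
  by rewrite eqxx.
apply: (@nontrivial_zero_of_seq K d s a x (tnth idx j0)).
- move=> i l; rewrite /x; case: pickP => [j _|_]; last exact: cong2_refl.
  exact/cong2Ml/coh_y.
- rewrite x_idx => x0; apply: (@piX_neq0 K (t j0)) => l.
  by move: (x0 l); rewrite y_j0 mulr1.
move=> l; rewrite (sum_tnth_support idx_uniq); last first.
  move=> i i_out; rewrite /x; case: pickP => [j /eqP ij | _].
    by rewrite -ij mem_tnth in i_out.
  by rewrite expr0n gtn_eqF // mulr0.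
under eq_bigr => j _ do rewrite x_idx.
apply: cong2_trans (_ : cong2 l _ (pi ^+ E * \sum_j pi ^+ e j * u j l * y j l ^+ d)) _.
  rewrite mulr_sumr; apply: cong2_sum => j; apply: cong2_trans (cong2Mr _ (a_lvl j l)) _.
  have -> : pi ^+ r j * u j l * (pi ^+ t j * y j l) ^+ d =
      pi ^+ (r j + d * t j) * u j l * y j l ^+ d by rewrite exprMn -exprM exprD mulnC; ring.
  by rewrite rt exprD -!mulrA; apply: cong2_refl.
by have := cong2Ml (pi ^+ E) (y_zero l); rewrite mulr0.
Qed.

End Rescaling.

Section ReducedForm.
Variables (K : ramext) (m : nat).
Local Notation R := (zsqrt (Defs.rad K)).
Local Notation pi := (uniformizer K).
Local Notation d := (2 * m)%N.
Hypothesis m_odd : odd m.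

Lemma hensel_solve (G u w : nat -> R) (s0 : R) :
  coherent_seq G -> coherent_seq w -> (forall n, cong2 n (u n * w n) 1) ->
  unit2 s0 -> cong2 3 (G 3 + u 3 * s0 ^+ d) 0 ->
  exists s, coherent_seq s /\ forall n, cong2 n (G n + u n * s n ^+ d) 0.
Proof.
move=> cohG cohw uw unit_s0 G3; pose T n := - (G n * w n).
have cohT : coherent_seq T by move=> n; apply/cong2N/cong2M; [apply: cohG | apply: cohw].
have uw0 n : cong2 n (u n * w n - 1) 0 by have /cong2_subr0 := uw n.
have [s [cohs sT]] : exists s, coherent_seq s /\ forall n, cong2 n (s n ^+ d) (T n).
  apply: (hensel_root m_odd cohT unit_s0); apply/cong2_subr0.
  have -> : s0 ^+ d - T 3 = w 3 * (G 3 + u 3 * s0 ^+ d) - s0 ^+ d * (u 3 * w 3 - 1).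
    by rewrite /T; ring.
  by apply: cong2B0; apply: cong2M0.
exists s; split=> // n.
have -> : G n + u n * s n ^+ d = u n * (s n ^+ d - T n) - G n * (u n * w n - 1).
  by rewrite /T; ring.
by apply: cong2B0; apply: cong2M0; [have /cong2_subr0 := sT n |].
Qed.

Lemma reduced_form_mod8 (b : bool) d3 d4 (u1 u2 u3 u4 w2 v1 v2 : R) :
  ((d3, d4) \in [:: (2, 3); (3, 4)])%N ->
  cong2 3 (u2 * w2) 1 -> unit2 u3 -> unit2 u4 ->
  cong2 3 u1 (1 + (if b then pi else 0) + pi ^+ 2 * v1) ->
  cong2 3 u2 (1 + (if b then pi else 0) + pi ^+ 2 * v2) ->
  exists z3 z4 s, unit2 s /\
    cong2 3 (u1 + u2 * s ^+ d + pi ^+ d3 * u3 * z3 ^+ d + pi ^+ d4 * u4 * z4 ^+ d) 0.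
Proof.
move=> d34 uw2 u3_unit u4_unit /cong2_subr0 u1E /cong2_subr0 u2E.
have [e pi2] := uniformizer_sqr K.
have [d3_ge2 d4_ge2] : (2 <= d3)%N /\ (2 <= d4)%N.
  by move: d34; rewrite !inE => /orP[] /eqP[-> ->].
have w2_unit : unit2 w2 by apply: (@unit2_cong1 _ 3 w2 u2); rewrite // mulrC.
have search : solvable_mod8 pi (d %% 8) d3 d4.
  have /allP/(_ (d %% 8)%N) := solvable_mod8_uniformizer K; rewrite !inE.
  have -> : (d %% 8 == 2)%N || (d %% 8 == 6)%N by apply/orP; lia.
  by move=> /(_ isT)/andP[]; move: d34; rewrite !inE => /orP[] /eqP[-> ->].
have [||z3 [z4 [s [s_unit sum0]]]] := solvable_mod8_sound ((v1 - v2) * w2) pi2 d3_ge2 d4_ge2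
  m_odd search (_ : unit2 (u3 * w2)) (_ : unit2 (u4 * w2)); rewrite ?unit2M ?w2_unit ?andbT //.
exists z3, z4, s; split=> //.
set B := pi ^+ 2 * (v1 - v2) + pi ^+ d3 * u3 * z3 ^+ d + pi ^+ d4 * u4 * z4 ^+ d.
have /cong2_subr0 g0 := uw2.
set E := 1 + _ + _ + _ + _ in sum0; set f1 := u1 - _ in u1E; set f2 := u2 - _ in u2E.
have -> : u1 + u2 * s ^+ d + pi ^+ d3 * u3 * z3 ^+ d + pi ^+ d4 * u4 * z4 ^+ d =
    u2 * E + f1 - f2 - (u2 * w2 - 1) * B by rewrite /E /f1 /f2 /B; ring.
apply: cong2B0; last by rewrite mulrC; apply: cong2M0.
by apply: cong2B0 => //; apply: cong2D0 => //; apply: cong2M0.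
Qed.

Lemma reduced_form_zero (b : bool) d3 d4 (u1 u2 u3 u4 w2 : nat -> R) (v1 v2 : R) :
  ((d3, d4) \in [:: (2, 3); (3, 4)])%N ->
  coherent_seq u1 -> coherent_seq u3 -> coherent_seq u4 -> coherent_seq w2 ->
  (forall n, cong2 n (u2 n * w2 n) 1) -> unit2 (u3 3) -> unit2 (u4 3) ->
  cong2 3 (u1 3) (1 + (if b then pi else 0) + pi ^+ 2 * v1) ->
  cong2 3 (u2 3) (1 + (if b then pi else 0) + pi ^+ 2 * v2) ->
  exists z3 z4 s, coherent_seq s /\ forall n,
    cong2 n (u1 n + u2 n * s n ^+ d + pi ^+ d3 * u3 n * z3 ^+ d + pi ^+ d4 * u4 n * z4 ^+ d) 0.
Proof.
move=> d34 coh1 coh3 coh4 cohw uw u3_unit u4_unit u1E u2E.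
have [z3 [z4 [s0 [s0_unit sum0]]]] := reduced_form_mod8 d34 (uw 3) u3_unit u4_unit u1E u2E.
pose G n := u1 n + pi ^+ d3 * u3 n * z3 ^+ d + pi ^+ d4 * u4 n * z4 ^+ d.
have GE n x : G n + u2 n * x = u1 n + u2 n * x + pi ^+ d3 * u3 n * z3 ^+ d
    + pi ^+ d4 * u4 n * z4 ^+ d by rewrite /G; ring.
have cohG : coherent_seq G.
  move=> n; apply: cong2D; first apply: cong2D; first exact: coh1.
    exact/cong2Mr/cong2Ml/coh3.
  exact/cong2Mr/cong2Ml/coh4.
have [|s [cohs s_root]] := hensel_solve cohG cohw uw s0_unit; first by rewrite GE.
by exists z3, z4, s; split=> // n; rewrite -GE.
Qed.

End ReducedForm.

Section Levels.
Variable K : ramext.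
Local Notation R := (zsqrt (Defs.rad K)).
Local Notation pi := (uniformizer K).

Lemma eqO_piX_mul (A u : OK) r : eqO A (mulO K (expO K (piO K) r) u) ->
  forall n, cong2 n (approx K A n) (pi ^+ r * approx K u n).
Proof. by move/(eqOP K)=> Au n; move: (Au n); rewrite approx_mul approx_exp approx_pi. Qed.

Lemma unitO_inv u : unitO K u ->
  exists w, coherent_seq (approx K w) /\ forall n, cong2 n (approx K u n * approx K w n) 1.
Proof. by case=> w [/(coherentP K) cw /(eqOP K) uw]; exists w; split=> // n; move: (uw n). Qed.

Lemma unitO_unit2 u n : unitO K u -> (0 < n)%N -> unit2 (approx K u n).
Proof. by case/unitO_inv=> w [_ uw] n_gt0; apply: unit2_cong1 n_gt0 (uw n). Qed.

Lemma picoef_cong u b : picoef K u b ->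
  exists v, cong2 3 (approx K u 3) (1 + (if b then pi else 0) + pi ^+ 2 * v).
Proof.
case=> w [_ /(eqOP K) uE]; exists (approx K w 3); move: (uE 3%N); clear uE.
by case: b; rewrite !approx_add approx_mul approx_exp !approx_pi ?approx_zero approx_one.
Qed.

Lemma at_level_inj d A k k' : at_level K d A k -> at_level K d A k' -> (k %% d = k' %% d)%N.
Proof.
case=> r [u [_ [uU [Au <-]]]] [r' [u' [_ [uU' [Au' <-]]]]]; congr (_ %% _)%N.
pose n := (maxn r r').+1.
apply: (@piX_unit_inj K n r r' (approx K u n) (approx K u' n)).
- by rewrite ltnS leq_maxl.
- by rewrite ltnS leq_maxr.
- exact: unitO_unit2.
- exact: unitO_unit2.
exact: cong2_trans (cong2_sym (eqO_piX_mul Au n)) (eqO_piX_mul Au' n).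
Qed.

Lemma at_level_neq d s (a : 'I_s -> OK) i j k e e' :
  at_level K d (a i) (k + e) -> at_level K d (a j) (k + e') ->
  (e < d)%N -> (e' < d)%N -> e != e' -> i != j.
Proof.
move=> ai aj ed e'd; apply: contraNneq => eij; rewrite eij in ai.
by apply/eqP/(addn_modn_inj (at_level_inj ai aj)).
Qed.

End Levels.

Lemma at_level_coef_level K d A k b : at_level_coef K d A k b -> at_level K d A k.
Proof. by case=> r [u [cu [uu [Au [rk _]]]]]; exists r, u. Qed.

Lemma uniq_levels K d s (a : 'I_s -> OK) k (i1 i2 i3 i4 : 'I_s) d3 d4 :
  (0 < d3 < d4)%N -> (d4 < d)%N -> i1 != i2 ->
  at_level K d (a i1) k -> at_level K d (a i2) k ->
  at_level K d (a i3) (k + d3) -> at_level K d (a i4) (k + d4) ->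
  uniq [:: i1; i2; i3; i4].
Proof.
case/andP=> d3_gt0 d34 d4_lt n12 L1 L2 L3 L4; rewrite -(addn0 k) in L1 L2.
have d3_lt := ltn_trans d34 d4_lt; have d_gt0 := ltn_trans d3_gt0 d3_lt.
have [n03 n04 n34] : [/\ 0 != d3, 0 != d4 & d3 != d4]%N.
  by rewrite !neq_ltn d3_gt0 d34 (ltn_trans d3_gt0 d34).
rewrite /= !inE !negb_or n12 (at_level_neq L1 L3) ?(at_level_neq L1 L4) //.
by rewrite (at_level_neq L2 L3) ?(at_level_neq L2 L4) ?(at_level_neq L3 L4).
Qed.

Lemma zero_of_levels K m s (a : 'I_s -> OK) k (i1 i2 i3 i4 : 'I_s) (b : bool) d3 d4 :
  odd m -> (3 <= m)%N -> ((d3, d4) \in [:: (2, 3); (3, 4)])%N -> i1 != i2 ->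
  at_level_coef K (2 * m) (a i1) k b -> at_level_coef K (2 * m) (a i2) k b ->
  at_level K (2 * m) (a i3) (k + d3) -> at_level K (2 * m) (a i4) (k + d4) ->
  has_nontrivial_zero K (2 * m) a.
Proof.
move=> m_odd m_ge3 d34 n12 L1 L2 L3 L4.
have uniq_idx : uniq [:: i1; i2; i3; i4].
  apply: (uniq_levels _ _ n12 (at_level_coef_level L1) (at_level_coef_level L2) L3 L4).
    by move: d34; rewrite !inE => /orP[] /eqP[-> ->].
  by move: d34; rewrite !inE => /orP[] /eqP[_ ->]; lia.
case: L1 => r1 [u1 [/(coherentP K) cu1 [_ [A1 [rk1 /picoef_cong [v1 u1E]]]]]].
case: L2 => r2 [u2 [_ [/unitO_inv [w2 [cw2 uw2]] [A2 [rk2 /picoef_cong [v2 u2E]]]]]].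
case: L3 => r3 [u3 [/(coherentP K) cu3 [/unitO_unit2 uu3 [A3 rk3]]]].
case: L4 => r4 [u4 [/(coherentP K) cu4 [/unitO_unit2 uu4 [A4 rk4]]]].
have [z3 [z4 [sq [cohsq sq0]]]] := reduced_form_zero m_odd d34 cu1 cu3 cu4 cw2 uw2
  (uu3 3%N isT) (uu4 3%N isT) u1E u2E.
apply: (@nontrivial_zero_of_rescaled K (2 * m)%N s a 4 [tuple i1; i2; i3; i4] k
  (tnth [tuple r1; r2; r3; r4]) (tnth [tuple 0; 0; d3; d4]%N)
  (tnth [tuple approx K u1; approx K u2; approx K u3; approx K u4])
  (tnth [tuple fun=> 1; sq; fun=> z3; fun=> z4]) ord0) => //.
- by rewrite muln_gt0 (leq_trans _ m_ge3).
- by case=> [[|[|[|[|//]]]] ?] l /=; apply: eqO_piX_mul.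
- by case=> [[|[|[|[|//]]]] ?] /=; rewrite ?addn0.
- case=> [[|[|[|[|//]]]] ?] n //=; exact: cong2_refl.
move=> l; move: (sq0 l); rewrite !big_ord_recl big_ord0 /=.
by rewrite expr0 expr1n !mul1r mulr1 addr0 !addrA.
Qed.

Local Close Scope ring_scope.

Theorem lemma15 (K : ramext) (m s : nat) (a : 'I_s -> OK) :
  odd m -> (3 <= m)%N ->
  (forall i, coherent (a i)) ->
  (forall i, ~ eqO (a i) zeroO) ->
  (exists k : nat,
     (exists (i j : 'I_s) (b : bool),
        i != j /\ at_level_coef K (2 * m) (a i) k b /\ at_level_coef K (2 * m) (a j) k b) /\
     ((exists i j : 'I_s,
         at_level K (2 * m) (a i) (k + 2) /\ at_level K (2 * m) (a j) (k + 3)) \/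
      (exists i j : 'I_s,
         at_level K (2 * m) (a i) (k + 3) /\ at_level K (2 * m) (a j) (k + 4)))) ->
  has_nontrivial_zero K (2 * m) a.
Proof.
move=> m_odd m_ge3 _ _ [k [[i1 [i2 [b [n12 [L1 L2]]]]] L34]].
by case: L34 => [[i3 [i4 [L3 L4]]] | [i3 [i4 [L3 L4]]]];
  apply: (zero_of_levels m_odd m_ge3 _ n12 L1 L2 L3 L4).
Qed.
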